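(* Let $\mathcal{C}$ be a translation based cipher over $V=(\mathbb{F}_2)^{mn}$ with a strongly proper round $h$, and suppose that for some integer $r$ every brick of the bricklayer transformation $\gamma_h$ satisfies either (A) $1<r<m$, the brick is differentially $2^r$-uniform and strongly $(r-1)$-anti-invariant; or (B) $1\le r<m$, the brick is weakly $2^r$-uniform and strongly $r$-anti-invariant (with the same alternative (A) or (B) for all bricks). Then $\Gamma_h(\mathcal{C})$ is primitive and is not a wreath product; that is, writing $mn=d$, it is not the case that $\Gamma_h(\mathcal{C})=(S_1\times\dots\times S_c).O.P$ with $T(V)=T_1\times\dots\times T_c$, where $c>1$ divides $d$, each $T_i$ is an abelian subgroup of $S_i$ of order $2^{d/c}$, each $S_i\cong\mathrm{Alt}(2^{d/c})$ or $\mathrm{Sym}(2^{d/c})$, the $S_i$ are all conjugate, $O\le\mathrm{Out}(S_1)\times\dots\times\mathrm{Out}(S_c)$, and $P$ permutes the $S_i$ transitively.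
   Context: Permutations act on the right. Let $m,n>1$ and $V=V_1\oplus\dots\oplus V_n$ with each $V_i\cong(\mathbb{F}_2)^m$. $\sigma_v:x\mapsto x+v$, $T(V)=\{\sigma_v:v\in V\}$. A bricklayer transformation is a permutation $\gamma$ of $V$ with permutations (''bricks'') $\gamma_i$ of $V_i$ such that $(v_1+\dots+v_n)\gamma=v_1\gamma_1+\dots+v_n\gamma_n$. A wall is a nontrivial proper subspace of $V$ that is a sum of some $V_i$; $\lambda\in\mathrm{GL}(V)$ is a proper mixing layer if no wall is $\lambda$-invariant, and strongly proper if there are no walls $W,W'$ with $W\lambda=W'$. A tb cipher $\mathcal{C}=\{\tau_k:k\in\mathcal{K}\}$ has $\tau_k=\tau_{k,1}\cdots\tau_{k,l}$ with $\tau_{k,h}=\gamma_h\lambda_h\sigma_{\phi(k,h)}$, $\gamma_h$ a key-independent bricklayer transformation with $0\gamma_h=0$, $\lambda_h\in\mathrm{GL}(V)$ key-independent, $\phi:\mathcal{K}\times\{1,\dots,l\}\to V$; a round $h$ is proper if $\lambda_h$ is a proper mixing layer and $k\mapsto\phi(k,h)$ is onto $V$ (a tb cipher has at least one proper round), and strongly proper if moreover $\lambda_h$ is strongly proper. $\Gamma_h(\mathcal{C})=\langle\tau_{k,h}:k\in\mathcal{K}\rangle$. For $f:(\mathbb{F}_2)^m\to(\mathbb{F}_2)^m$, $\hat f_u(x)=f(x+u)+f(x)$. $f$ is differentially $\delta$-uniform if $|\{x:\hat f_u(x)=v\}|\le\delta$ for all $u\ne0$, all $v$; weakly $\delta$-uniform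 if $|\mathrm{Im}(\hat f_u)|>2^{m-1}/\delta$ for all $u\ne0$. For $1\le s<m$, $f$ is strongly $s$-anti-invariant if for any subspaces $U,W$ with $f(U)=W$, either $\dim U=\dim W<m-s$ or $U=W=(\mathbb{F}_2)^m$. The notation $G=(S_1\times\dots\times S_c).O.P$ means $S_1\times\dots\times S_c$ is normal in $G$ and the quotient is an extension of $O$ by $P$. *)

From HB Require Import structures.
From mathcomp Require Import all_boot all_order all_algebra all_fingroup all_solvable all_field.
Set Implicit Arguments. Unset Strict Implicit. Unset Printing Implicit Defensive.
Import GRing.Theory.

(* The whole space
   V = V_1 (+) ... (+) V_n is modelled as {ffun 'I_n -> 'rV['F_2]_m},
   the i-th component v i being the V_i-component of v.
   Permutations in MathComp compose left-to-right: (s * t) x = t (s x),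
   i.e. they act on the right, as in the paper. *)
Notation brickT m := 'rV['F_2]_m.
Notation stateT m n := {ffun 'I_n -> 'rV['F_2]_m}.

Definition transl (m n : nat) (v : stateT m n) : {perm stateT m n} :=
  perm (can_inj (addrK v)).

Definition translGroup (m n : nat) : {set {perm stateT m n}} :=
  [set transl v | v : stateT m n].

Definition wall (m n : nat) (S : {set 'I_n}) : {set stateT m n} :=
  [set v : stateT m n | [forall i, (i \notin S) ==> (v i == 0%R)]].

Definition is_wall_index (n : nat) (S : {set 'I_n}) : Prop :=
  S != set0 /\ S != [set: 'I_n].

Definition in_GL (m n : nat) (lam : {perm stateT m n}) : Prop :=
  linear (fun x : stateT m n => lam x).

Definition proper_mixing (m n : nat) (lam : {perm stateT m n}) : Prop :=
  forall S : {set 'I_n}, is_wall_index S -> lam @: wall m S <> wall m S.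

Definition strongly_proper_mixing (m n : nat) (lam : {perm stateT m n}) : Prop :=
  forall S S' : {set 'I_n}, is_wall_index S -> is_wall_index S' ->
    lam @: wall m S <> wall m S'.

Definition bricklayer_with (m n : nat) (gam : {perm stateT m n})
    (b : 'I_n -> {perm brickT m}) : Prop :=
  forall v : stateT m n, gam v = [ffun i => b i (v i)].

Definition round_perm (m n l : nat) (K : finType)
    (gam lam : 'I_l -> {perm stateT m n}) (phi : K -> 'I_l -> stateT m n)
    (k : K) (h : 'I_l) : {perm stateT m n} :=
  gam h * lam h * transl (phi k h).

Definition Gamma_h (m n l : nat) (K : finType)
    (gam lam : 'I_l -> {perm stateT m n}) (phi : K -> 'I_l -> stateT m n)
    (h : 'I_l) : {group {perm stateT m n}} :=
  <<[set round_perm gam lam phi k h | k : K]>>%G.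

Definition strongly_proper_round (m n l : nat) (K : finType)
    (lam : 'I_l -> {perm stateT m n}) (phi : K -> 'I_l -> stateT m n)
    (h : 'I_l) : Prop :=
  [/\ proper_mixing (lam h), strongly_proper_mixing (lam h)
    & forall v : stateT m n, exists k : K, phi k h = v].

Definition fder (m : nat) (f : brickT m -> brickT m) (u x : brickT m) : brickT m :=
  (f (x + u) + f x)%R.

Definition diff_uniform (m : nat) (f : brickT m -> brickT m) (delta : nat) : Prop :=
  forall u v : brickT m, u != 0%R ->
    #|[set x : brickT m | fder f u x == v]| <= delta.

(* |Im(hat f_u)| > 2^(m-1)/delta, written multiplicatively (delta > 0) *)
Definition weakly_uniform (m : nat) (f : brickT m -> brickT m) (delta : nat) : Prop :=
  forall u : brickT m, u != 0%R ->
    2 ^ (m - 1) < #|[set fder f u x | x : brickT m]| * delta.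

Definition strongly_anti_invariant (m : nat) (f : brickT m -> brickT m) (s : nat) : Prop :=
  forall U W : {vspace brickT m},
    f @: [set x : brickT m | x \in U] = [set x : brickT m | x \in W] ->
    ((\dim U = \dim W) /\ \dim U < m - s) \/ (U = fullv /\ W = fullv).

Local Open Scope group_scope.
Definition wreath_type (m n : nat) (G : {group {perm stateT m n}}) : Prop :=
  let d := (m * n)%N in
  exists (c : nat) (S T : 'I_c -> {group {perm stateT m n}})
         (N : {group {perm stateT m n}}),
  [/\ 1 < c /\ c %| d,
     (\big[dprod/1]_(i < c) S i = N /\ (N <| G)%g),
     (\big[dprod/1]_(i < c) T i = translGroup m n /\
       (forall i, [/\ T i \subset S i, abelian (T i) & #|T i| = (2 ^ (divn d c))%N])),
     (forall i, S i \isog 'Alt_('I_((2 ^ (divn d c))%N))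
                \/ S i \isog 'Sym_('I_((2 ^ (divn d c))%N))) /\
     (* G permutes the S_i by conjugation (this action defines P), and
        transitively, so that the S_i are all conjugate *)
     ((forall g i, g \in G -> exists j, S i :^ g = S j) /\
     (forall i j, exists2 g, g \in G & S i :^ g = S j))
   & (* O = K/N, K the kernel of the action of G on {S_i}, embeds in
        Out(S_1) x ... x Out(S_c) via conjugation: an element of K inducing an
        inner automorphism on every S_i lies in N *)
     forall g, g \in G -> (forall i, S i :^ g = S i) ->
       (forall i, exists2 s, s \in S i & forall x, x \in S i -> x ^ g = x ^ s) ->
       g \in N].

(* Say that g maps the cosets of an additive subset O of V when g (x + O) = g x + g(O) for
   all x.  If the round map g = gam_h lam_h does so, then O is a wall: whenever O meets a
   brick V_j, the brick f_j maps the cosets of A_j = O \cap V_j, and the derivative of f_j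
   in a direction of O takes its values in one coset of f_j(A_j); the uniformity bound then
   makes the subspace f_j(A_j) too large for anti-invariance unless A_j = V_j.

   Primitivity: Gamma_h contains T(V), so in a block system the block of 0 is an additive
   subgroup whose cosets are the blocks, and g, fixing 0, maps these cosets.  The block is
   thus a wall fixed by gam_h, hence by lam_h, against properness.

   Wreath products: T(V) normalises each S_i, so the S_i-orbit of 0 is an additive subgroup
   whose cosets are the S_i-orbits.  As g permutes the S_i, these orbits are walls mapped
   to walls by lam_h, and strong properness forces them to be V.  Then S_2 centralises the
   transitive group S_1, so it acts regularly and has order 2^(mn), which is the order of
   no alternating or symmetric group. *)

From HB Require Import structures.
From mathcomp Require Import all_boot all_order all_algebra all_fingroup all_solvable.
From mathcomp Require Import all_field zify.
Set Implicit Arguments. Unset Strict Implicit. Unset Printing Implicit Defensive.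
Import GRing.Theory.

(* Gives [stateT m n] its [finLmodType 'F_2] structure, so that its subsets can be
   treated like those of a brick. *)
HB.saturate finfun_of.

Section Char2.
Local Open Scope ring_scope.
Variable V : lmodType 'F_2.

Lemma addrr_F2 (x : V) : x + x = 0.
Proof. by rewrite -[x]scale1r -scalerDl (_ : 1 + 1 = 0) ?scale0r //; apply/val_inj. Qed.

Lemma addrKK_F2 (x y : V) : x + y + y = x.
Proof. by rewrite -addrA addrr_F2 addr0. Qed.

End Char2.

Section Cosets.
Local Open Scope ring_scope.
Variable V : finLmodType 'F_2.
Implicit Types (g : V -> V) (A : {set V}).

Definition add_coset (x : V) A := [set x + a | a in A].

Lemma card_add_coset x A : #|add_coset x A| = #|A|.
Proof. by apply: card_imset; exact: addrI. Qed.

(* In characteristic 2, [g (x + u) + g x = g (x + u) - g x]: [g] maps every coset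
   [x + A] into the coset [g x + g @: A]. *)
Definition maps_cosets g A := forall x u, u \in A -> g (x + u) + g x \in g @: A.

Lemma maps_cosetsP g A :
  (forall x, g @: add_coset x A = add_coset (g x) (g @: A)) -> maps_cosets g A.
Proof.
move=> gA x u uA; have /imsetP[b bgA gxu] : g (x + u) \in add_coset (g x) (g @: A).
  by rewrite -gA; apply/imset_f/imset_f.
by rewrite gxu addrAC addrr_F2 add0r.
Qed.

Lemma maps_cosets_image_closed g A :
  addr_closed A -> maps_cosets g A -> addr_closed (g @: A).
Proof.
move=> [A0 AD] gA; split; first by have := gA 0 0 A0; rewrite addr0 addrr_F2.
move=> _ _ /imsetP[a aA ->] /imsetP[b bA ->].
by have := gA b (a + b) (AD a b aA bA); rewrite [b + _]addrC addrKK_F2.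
Qed.

End Cosets.

Section Subspaces.
Local Open Scope ring_scope.
Variable m : nat.

Lemma addr_closed_vspace (A : {set brickT m}) :
  addr_closed A -> exists U : {vspace brickT m}, A = [set x | x \in U].
Proof.
move=> [A0 AD]; pose X := in_tuple (enum A); exists <<X>>%VS.
apply/setP => x; rewrite inE; apply/idP/idP => [Ax|/coord_span ->].
  by apply: memv_span; rewrite mem_enum.
apply: (big_ind (fun y => y \in A)) => // i _.
have Xi : X`_i \in A by rewrite -mem_enum; apply: mem_nth; exact: ltn_ord.
have [-> | ->] : coord X i x = 0 \/ coord X i x = 1.
- by case: (coord X i x) => [[|[|k]]] //= k_lt2; [left | right]; apply/val_inj.
- by rewrite scale0r.
- by rewrite scale1r.
Qed.

Lemma card_brick : #|brickT m| = (2 ^ m)%N.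
Proof. by rewrite card_mx card_Fp // mul1n. Qed.

Lemma card_vspace_F2 (U : {vspace brickT m}) : #|[set x | x \in U]| = (2 ^ \dim U)%N.
Proof. by rewrite cardsE card_vspace card_Fp. Qed.

End Subspaces.

Lemma card_le_fibers (aT rT : finType) (F : aT -> rT) (D : {set rT}) k :
  (forall x, F x \in D) -> (forall v, #|[set x | F x == v]| <= k) ->
  #|aT| <= #|D| * k.
Proof.
move=> FD Fk; rewrite -[#|aT|]sum1_card (partition_big F (mem D)) //= -sum_nat_const.
by apply: leq_sum => v _; rewrite sum1_card -cardsE; exact: Fk.
Qed.

Definition brick_condition m r (f : brickT m -> brickT m) : Prop :=
  (1 < r < m) /\ diff_uniform f (2 ^ r) /\ strongly_anti_invariant f (r - 1)
  \/ (1 <= r < m) /\ weakly_uniform f (2 ^ r) /\ strongly_anti_invariant f r.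

Section BrickCosets.
Local Open Scope ring_scope.
Variables (m r : nat) (f : {perm brickT m}) (A : {set brickT m}) (u : brickT m).
Hypotheses (A_closed : addr_closed A) (fA : maps_cosets f A) (u_neq0 : u != 0).
(* The derivative of [f] in direction [u] takes its values in a single coset of [f @: A]. *)
Hypothesis fu : forall y, fder f u y + fder f u 0 \in f @: A.

Lemma fder_neq0 a y : a != 0 -> fder f a y != 0.
Proof.
apply: contraNneq => fder0.
have /perm_inj : f (y + a) = f y.
  by rewrite -[LHS](addrKK_F2 _ (f y)) -/(fder f a y) fder0 add0r.
by move/(canRL (addKr y)) ->; rewrite addNr.
Qed.

Lemma fder_image_coset y : fder f u y \in add_coset (fder f u 0) (f @: A).
Proof. by apply/imsetP; exists (fder f u y + fder f u 0); rewrite // addrC addrKK_F2. Qed.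

Lemma diff_uniform_card_image delta :
  diff_uniform f delta -> (2 ^ m <= #|f @: A| * delta)%N.
Proof.
move=> df; rewrite -card_brick -(card_add_coset (fder f u 0)).
exact: card_le_fibers fder_image_coset (df u ^~ u_neq0).
Qed.

Lemma diff_uniform_card_image_neq0 delta a :
  diff_uniform f delta -> a \in A -> a != 0 -> (2 ^ m <= #|f @: A :\ 0%R| * delta)%N.
Proof.
move=> df aA a_neq0; rewrite -card_brick.
apply: card_le_fibers (df a ^~ a_neq0) => y.
by rewrite !inE fder_neq0 //; exact: fA.
Qed.

Lemma weakly_uniform_card_image delta :
  weakly_uniform f delta -> (2 ^ (m - 1) < #|f @: A| * delta)%N.
Proof.
move=> wf; apply: leq_trans (wf u u_neq0) _.
rewrite leq_mul2r -(card_add_coset (fder f u 0) (f @: A)).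
apply/orP; right; apply/subset_leq_card/subsetP => _ /imsetP[y _ ->].
exact: fder_image_coset.
Qed.

Lemma brick_maps_cosets_full : brick_condition r f -> A = setT.
Proof.
have [U defA] := addr_closed_vspace A_closed.
have [W defB] := addr_closed_vspace (maps_cosets_image_closed A_closed fA).
have fAB : f @: [set x | x \in U] = [set x | x \in W] by rewrite -defA.
have cardB : #|f @: A| = (2 ^ \dim W)%N by rewrite defB card_vspace_F2.
have fullA : U = fullv -> A = setT.
  by move=> Uf; apply/setP => x; rewrite defA Uf inE memvf inE.
case=> [[/andP[r_gt1 r_lt_m] [df ai]] | [/andP[r_gt0 r_lt_m] [wf ai]]].
- have [[dimUW dimU] | [/fullA //]] := ai U W fAB.
  have := diff_uniform_card_image df; rewrite cardB -expnD leq_exp2l // => mW.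
  have : (1 < #|A|)%N by rewrite defA card_vspace_F2 -{1}(expn0 2) ltn_exp2l //; lia.
  rewrite (cardsD1 0%R) A_closed.1 add1n ltnS card_gt0 => /set0Pn[a /setD1P[a_neq0 aA]].
  have ltB : (#|f @: A :\ 0%R| < #|f @: A|)%N.
    by rewrite [X in (_ < X)%N](cardsD1 0%R) (maps_cosets_image_closed A_closed fA).1.
  have : (2 ^ m < 2 ^ (\dim W + r))%N.
    apply: leq_ltn_trans (diff_uniform_card_image_neq0 df aA a_neq0) _.
    by rewrite expnD -cardB ltn_mul2r expn_gt0 ltB.
  by rewrite ltn_exp2l // => ?; exfalso; lia.
- have [[dimUW dimU] | [/fullA //]] := ai U W fAB.
  have := weakly_uniform_card_image wf; rewrite cardB -expnD ltn_exp2l // => mW.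
  by exfalso; lia.
Qed.

End BrickCosets.

Section BrickAt.
Local Open Scope ring_scope.
Variables m n : nat.

Definition brick_at (j : 'I_n) (a : brickT m) : stateT m n :=
  [ffun i => if i == j then a else 0].

Lemma brick_at0 j : brick_at j 0 = 0.
Proof. by apply/ffunP => i; rewrite !ffunE; case: eqP. Qed.

Lemma brick_atD j a b : brick_at j (a + b) = brick_at j a + brick_at j b.
Proof. by apply/ffunP => i; rewrite !ffunE; case: eqP; rewrite ?addr0. Qed.

Lemma brick_atE (v : stateT m n) j :
  (forall i, i != j -> v i = 0) -> v = brick_at j (v j).
Proof. by move=> v0; apply/ffunP => i; rewrite ffunE; case: eqP => [-> | /eqP/v0]. Qed.

Lemma sum_brick_at (v : stateT m n) : v = \sum_j brick_at j (v j).
Proof.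
apply/ffunP => i; rewrite sum_ffunE (bigD1 i) //= big1 => [|k /negbTE ki].
  by rewrite !ffunE eqxx addr0.
by rewrite ffunE eq_sym ki.
Qed.

End BrickAt.

Section Bricklayer.
Local Open Scope ring_scope.
Variables (m n : nat) (f : 'I_n -> {perm brickT m}) (gam : {perm stateT m n}).
Hypotheses (gamE : bricklayer_with gam f) (f0 : forall i, f i 0 = 0).

Lemma gam_brick_at j a : gam (brick_at j a) = brick_at j (f j a).
Proof. by apply/ffunP => i; rewrite gamE !ffunE; case: eqP => // ->. Qed.

Lemma gam_wall J : gam @: wall m J = wall m J.
Proof.
apply/eqP; rewrite eqEcard card_imset ?leqnn ?andbT; last exact: perm_inj.
apply/subsetP => _ /imsetP[v vJ ->]; move: vJ; rewrite !inE => vJ; apply/forallP => i.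
by apply/implyP => iJ; rewrite gamE ffunE (eqP (implyP (forallP vJ i) iJ)) f0.
Qed.

Lemma mem_gam_brick_at (O : {set stateT m n}) j b :
  (brick_at j b \in gam @: O) = (b \in f j @: [set a | brick_at j a \in O]).
Proof.
apply/imsetP/imsetP => [[o oO gamo] | [a aO ->]]; last first.
  by rewrite inE in aO; exists (brick_at j a); rewrite ?gam_brick_at.
have o_at : o = brick_at j (o j).
  apply: brick_atE => i ij; apply: (@perm_inj _ (f i)).
  by have := congr1 (fun v : stateT m n => v i) gamo; rewrite gamE !ffunE (negbTE ij) f0.
exists (o j); first by rewrite inE -o_at.
by have := congr1 (fun v : stateT m n => v j) gamo; rewrite gamE !ffunE eqxx.
Qed.

Variables (r : nat) (O : {set stateT m n}).
Hypotheses (O_closed : addr_closed O) (gamO : maps_cosets gam O).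

Lemma bricklayer_maps_cosets_brick_full j u :
  brick_condition r (f j) -> u \in O -> u j != 0 -> [set a | brick_at j a \in O] = setT.
Proof.
move=> fj uO uj_neq0; apply: (@brick_maps_cosets_full m r (f j) _ (u j)) => //.
- split; first by rewrite inE brick_at0 O_closed.1.
  by move=> a b; rewrite !inE brick_atD; exact: O_closed.2.
- move=> x a; rewrite inE -mem_gam_brick_at brick_atD -!gam_brick_at brick_atD.
  exact: gamO.
move=> y; rewrite -mem_gam_brick_at.
(* Outside brick [j] the derivatives of [gam] at [brick_at j y] and at [0] in direction [u]
   coincide, so their sum lives in brick [j]. *)
have -> : brick_at j (fder (f j) (u j) y + fder (f j) (u j) 0) =
    gam (brick_at j y + u) + gam (brick_at j y)
    + (gam (brick_at j 0 + u) + gam (brick_at j 0)).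
  apply/ffunP => i; rewrite !gamE !ffunE /fder.
  by case: eqP => [-> | _]; rewrite ?add0r ?f0 ?addr0 ?addrr_F2.
by apply: (maps_cosets_image_closed O_closed gamO).2; exact: gamO.
Qed.

Lemma bricklayer_maps_cosets_wall :
  (forall i, brick_condition r (f i)) -> exists J, O = wall m J.
Proof.
move=> fcond; exists [set j | [exists u in O, u j != 0]].
apply/setP => v; rewrite inE; apply/idP/forallP => [vO i | v0].
  by apply/implyP; apply: contraR => vi; rewrite inE; apply/exists_inP; exists v.
rewrite [v]sum_brick_at; apply: (big_ind (fun x => x \in O)).
- exact: O_closed.1.
- exact: O_closed.2.
move=> j _; have := v0 j; case: (boolP (j \in _)) => /= [|_ /eqP ->].
  rewrite inE => /exists_inP[u uO uj] _.
  have /setP/(_ (v j)) := bricklayer_maps_cosets_brick_full (fcond j) uO uj.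
  by rewrite !inE.
by rewrite brick_at0 O_closed.1.
Qed.

End Bricklayer.

Section Translations.
Local Open Scope ring_scope.
Variables m n : nat.

Lemma translE (v x : stateT m n) : transl v x = x + v.
Proof. by rewrite permE. Qed.

Lemma transl_add_coset x (A : {set stateT m n}) : transl x @: A = add_coset x A.
Proof. by apply: eq_imset => a; rewrite translE addrC. Qed.

Lemma transl_transitive (G : {group {perm stateT m n}}) :
  (forall v, transl v \in G) -> [transitive G, on [set: stateT m n] | 'P].
Proof.
move=> tG; apply/imsetP; exists 0 => //; apply/setP => y; rewrite inE.
by apply/esym/orbitP; exists (transl y); rewrite //= apermE translE add0r.
Qed.

Lemma translV (v : stateT m n) : (transl v)^-1%g = transl v.
Proof.
apply/eqP; rewrite eq_invg_mul; apply/eqP/permP => x.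
by rewrite permM !translE addrKK_F2 perm1.
Qed.

Lemma transl_conjE (s : {perm stateT m n}) (v y : stateT m n) :
  (s ^ transl v)%g y = s (y + v) + v.
Proof. by rewrite conjgE translV !permM !translE. Qed.

Lemma wall_set0 : wall m (set0 : {set 'I_n}) = [set 0].
Proof.
apply/setP => v; rewrite !inE; apply/forallP/eqP => [v0 | ->].
  by apply/ffunP => i; have := v0 i; rewrite inE ffunE => /eqP.
by move=> i; rewrite ffunE eqxx implybT.
Qed.

Lemma wall_setT : wall m [set: 'I_n] = setT.
Proof. by apply/setP => v; rewrite !inE; apply/forallP => i; rewrite inE. Qed.

Lemma transl0 : transl (0 : stateT m n) = 1%g.
Proof. by apply/permP => x; rewrite translE addr0 perm1. Qed.

Lemma translD (a b : stateT m n) : (transl a * transl b)%g = transl (a + b).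
Proof. by apply/permP => x; rewrite permM !translE addrA. Qed.

Lemma translGroup_group_set : group_set (translGroup m n).
Proof.
apply/group_setP; split.
  by apply/imsetP; exists 0; rewrite ?transl0.
by move=> _ _ /imsetP[a _ ->] /imsetP[b _ ->]; rewrite translD imset_f.
Qed.

Canonical translGroup_group := Group translGroup_group_set.

Lemma card_state : #|stateT m n| = (2 ^ (m * n))%N.
Proof. by rewrite card_ffun card_brick card_ord -expnM mulnC. Qed.

Lemma is_wall_indexP (J : {set 'I_n}) :
  wall m J != [set 0] -> wall m J != setT -> is_wall_index J.
Proof.
move=> ne0 neT; split.
  by apply: contraNneq ne0 => ->; rewrite wall_set0.
by apply: contraNneq neT => ->; rewrite wall_setT.
Qed.

Lemma orbit0_neq0 (X T : {group {perm stateT m n}}) :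
  (T \subset X)%g -> (T \subset translGroup m n)%g -> (1 < #|T|)%N ->
  orbit 'P X 0 != [set 0].
Proof.
move=> sTX sT_transl; rewrite cardG_gt1 => /trivgPn[t tT t_ne1].
have /imsetP[w _ tw] := subsetP sT_transl t tT.
have wX : w \in orbit 'P X 0.
  by apply/orbitP; exists t; rewrite ?(subsetP sTX) // tw /= apermE translE add0r.
apply/eqP => X0; move: wX; rewrite X0 inE => /eqP w0.
by move/eqP: t_ne1; rewrite tw w0 transl0.
Qed.

End Translations.

Section TranslationBlocks.
Local Open Scope ring_scope.
Variables (m n : nat) (G : {group {perm stateT m n}}) (Q : {set {set stateT m n}}).
Hypotheses (tG : forall v, transl v \in G) (Q_part : partition Q [set: stateT m n]).
Hypothesis Q_acts : [acts G, on Q | 'P^*].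

Let B := pblock Q 0.

Lemma pblock_perm s x : s \in G -> pblock Q (s x) = s @: pblock Q x.
Proof.
have /and3P[/eqP Q_cover Q_triv _] := Q_part.
have Qx : x \in cover Q by rewrite Q_cover inE.
move=> sG; apply: def_pblock => //; last by apply: imset_f; rewrite mem_pblock.
by have := actsP Q_acts s sG (pblock Q x); rewrite /= pblock_mem.
Qed.

Lemma pblock_add_coset x : pblock Q x = add_coset x B.
Proof. by rewrite -transl_add_coset -pblock_perm ?tG // translE add0r. Qed.

Lemma pblock0_closed : addr_closed B.
Proof.
have /and3P[/eqP Q_cover Q_triv _] := Q_part.
have B0 : 0 \in B by rewrite mem_pblock Q_cover inE.
split=> // a b aB bB.
have <- : pblock Q b = B by apply: def_pblock; rewrite ?pblock_mem ?Q_cover.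
by rewrite pblock_add_coset addrC; apply: imset_f.
Qed.

Lemma pblock0_maps_cosets (g : {perm stateT m n}) : g \in G -> g 0 = 0 -> maps_cosets g B.
Proof.
move=> gG g0; have gB : g @: B = B by rewrite -pblock_perm ?g0.
by apply: maps_cosetsP => x; rewrite gB -!pblock_add_coset pblock_perm.
Qed.

Lemma card_pblock0 : (#|Q| * #|B|)%N = #|stateT m n|.
Proof.
have /and3P[/eqP Q_cover Q_triv Q0] := Q_part.
rewrite -cardsT (card_partition Q_part) -sum_nat_const; apply: eq_bigr => X XQ.
have /set0Pn[x xX] : X != set0 by apply: contraNneq Q0 => <-.
by rewrite -(def_pblock Q_triv XQ xX) pblock_add_coset card_add_coset.
Qed.

End TranslationBlocks.

Section DirectProducts.
Local Open Scope group_scope.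
Variables (gT : finGroupType) (c : nat) (S T : 'I_c -> {group gT}) (N A : {group gT}).
Hypothesis defN : \big[dprod/1]_(i < c) S i = N.

Lemma bigdprod_cent (i j : 'I_c) : i != j -> S i \subset 'C(S j).
Proof.
have : \big[cprod/1]_(i < c) S i == (\prod_(i < c) S i)%G.
  by rewrite (bigdprodWcp defN) bigprodGE (bigdprodWY defN).
by move/bigcprodYP => cS; apply: cS.
Qed.

Lemma bigdprod_sub_norm :
  \big[dprod/1]_(i < c) T i = A -> (forall i, T i \subset S i) ->
  forall i, A \subset 'N(S i).
Proof.
move=> defA sTS i; rewrite -(bigdprodWY defA) gen_subG; apply/bigcupsP => j _.
apply: subset_trans (sTS j) _; have [-> | ji] := eqVneq j i; first exact: normG.
exact: subset_trans (bigdprod_cent ji) (cent_sub _).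
Qed.

End DirectProducts.

Lemma perm_orbit_conjsg (T : finType) (X : {group {perm T}}) (g : {perm T}) x :
  g @: orbit 'P X x = orbit 'P (X :^ g) (g x).
Proof.
apply/setP => z; apply/imsetP/idP => [[y Xy ->] | Xz].
  by rewrite -!apermE orbit_conjsg.
exists ((g^-1)%g z); last by rewrite -permM mulVg perm1.
by rewrite -(@orbit_conjsg _ _ 'P X g x) /= !apermE -permM mulVg perm1.
Qed.

Lemma card_cent_transitive (T : finType) (X Y : {group {perm T}}) x0 :
  (Y \subset 'C(X))%g -> orbit 'P X x0 = setT -> orbit 'P Y x0 = setT -> #|Y| = #|T|.
Proof.
move=> cXY X_trans Y_trans; rewrite -cardsT -Y_trans card_in_imset // => s t sY tY st.
apply/permP => y; have : y \in orbit 'P X x0 by rewrite X_trans inE.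
case/orbitP => u uX <-; rewrite /= -!permM.
have cYX := centP (subsetP cXY _ _).
by rewrite -(cYX s) // -(cYX t) // !permM -!apermE st.
Qed.

Lemma conj_orbit0 m n (X Y : {group {perm stateT m n}}) (g : {perm stateT m n}) :
  g 0%R = 0%R -> (X :^ g)%g = Y -> g @: orbit 'P X 0%R = orbit 'P Y 0%R.
Proof. by move=> g0 <-; rewrite perm_orbit_conjsg g0. Qed.

Section TranslationNormalizedOrbits.
Local Open Scope ring_scope.
Variables (m n : nat) (X : {group {perm stateT m n}}).
Hypothesis transl_norm : (translGroup m n \subset 'N(X))%g.

Let conj_transl s v : s \in X -> (s ^ transl v)%g \in X.
Proof. by move=> sX; rewrite memJ_norm // (subsetP transl_norm) ?imset_f. Qed.

Lemma orbit_add_coset x : orbit 'P X x = add_coset x (orbit 'P X 0).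
Proof.
apply/setP => z; apply/orbitP/imsetP => [[s sX <-] | [_ /orbitP[s sX <-] ->]] /=.
  exists ((s ^ transl x)%g 0).
    by apply/orbitP; exists (s ^ transl x)%g; rewrite ?conj_transl.
  by rewrite transl_conjE add0r addrC addrKK_F2.
exists (s ^ transl x)%g; first exact: conj_transl.
by rewrite !apermE transl_conjE addrr_F2 addrC.
Qed.

Lemma orbit0_closed : addr_closed (orbit 'P X 0).
Proof.
split=> [|a b Oa Ob]; first exact: orbit_refl.
by rewrite -(orbit_eqP Ob) orbit_add_coset addrC; apply/imsetP; exists a.
Qed.

End TranslationNormalizedOrbits.

Lemma conj_orbit0_maps_cosets m n (X Y : {group {perm stateT m n}})
    (g : {perm stateT m n}) :
  (translGroup m n \subset 'N(X))%g -> (translGroup m n \subset 'N(Y))%g ->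
  g 0%R = 0%R -> (X :^ g)%g = Y -> maps_cosets g (orbit 'P X 0%R).
Proof.
move=> tnX tnY g0 XgY; apply: maps_cosetsP => x.
by rewrite (conj_orbit0 g0 XgY) -!orbit_add_coset // perm_orbit_conjsg XgY.
Qed.

Lemma fact_neq_exp2 k d : 1 < d -> k`! != 2 ^ d.
Proof.
move=> d_gt1; have [k_le2 | k_gt2] := leqP k 2.
  have : k`! <= 2 by case: k k_le2 => [|[|[|]]].
  have : 2 < 2 ^ d by rewrite -{1}(expn1 2) ltn_exp2l.
  by move=> lt2 le2; apply/eqP => eq2; move: lt2 le2; rewrite eq2; lia.
apply/eqP => eq2; have : 3 %| k`! by apply: dvdn_fact; lia.
by rewrite eq2 Euclid_dvdX.
Qed.

Lemma card_Sym_neq_exp2 (T : finType) d : 1 < d -> #|('Sym_T)%g| != 2 ^ d.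
Proof. by move=> d_gt1; rewrite card_Sym fact_neq_exp2. Qed.

Lemma card_Alt_neq_exp2 (T : finType) d : 1 < d -> #|('Alt_T)%g| != 2 ^ d.
Proof.
move=> d_gt1; have [T_le1 | T_gt1] := leqP #|T| 1.
  have : #|('Alt_T)%g| <= #|T|`! by rewrite -card_Sym subset_leq_card ?subsetT.
  have : #|T|`! <= 1 by case: #|T| T_le1 => [|[|]].
  have : 2 < 2 ^ d by rewrite -{1}(expn1 2) ltn_exp2l.
  by move=> lt2 le1 leA; apply/eqP => eq2; move: lt2 le1 leA; rewrite eq2; lia.
apply/eqP => eq2; have := card_Alt T_gt1; rewrite eq2 -expnS => /esym/eqP.
by rewrite (negbTE (fact_neq_exp2 _ _)) //; lia.
Qed.

Section Round.
Local Open Scope ring_scope.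
Variables (m n r : nat) (f : 'I_n -> {perm brickT m}) (gam lam : {perm stateT m n}).
Hypotheses (gamE : bricklayer_with gam f) (f0 : forall i, f i 0 = 0) (lam_lin : in_GL lam).
Hypothesis f_cond : forall i, brick_condition r (f i).

Let g := (gam * lam)%g.

Lemma in_GLD a b : lam (a + b) = lam a + lam b.
Proof. by have := lam_lin 1 a b; rewrite !scale1r. Qed.

Lemma round0 : g 0 = 0.
Proof.
have gam0 : gam 0 = 0 by apply/ffunP => i; rewrite gamE !ffunE f0.
by rewrite permM gam0; apply: (addIr (lam 0)); rewrite -in_GLD !add0r.
Qed.

Lemma round_wall J : g @: wall m J = lam @: wall m J.
Proof.
by rewrite -{2}(gam_wall gamE f0 J) -imset_comp; apply: eq_imset => x; rewrite /= permM.
Qed.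

Lemma round_maps_cosets_wall (O : {set stateT m n}) :
  addr_closed O -> maps_cosets g O -> exists J, O = wall m J.
Proof.
move=> O_closed gO; apply: (bricklayer_maps_cosets_wall gamE f0 O_closed) f_cond.
move=> x u /(gO x)/imsetP[a aO]; rewrite !permM -in_GLD => /perm_inj ->.
exact: imset_f.
Qed.

Lemma round_primitive (G : {group {perm stateT m n}}) :
  (forall v, transl v \in G) -> g \in G -> proper_mixing lam ->
  [primitive G, on [set: stateT m n] | 'P].
Proof.
move=> tG gG lam_prop; rewrite /primitive transl_transitive //=.
apply/existsP => -[Q /and3P[Q_part Q_acts /andP[Q_gt1 Q_lt]]].
set B := pblock Q 0.
have [J BJ] := round_maps_cosets_wall (pblock0_closed tG Q_part Q_acts)
  (pblock0_maps_cosets tG Q_part Q_acts gG round0).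
have cardQB := card_pblock0 tG Q_part Q_acts; rewrite cardsT in Q_lt.
apply: (lam_prop J); last by rewrite -round_wall -BJ -(pblock_perm Q_part Q_acts) ?round0.
split; apply/eqP => defJ.
  move: Q_lt; rewrite -cardQB BJ defJ wall_set0 cards1 muln1 ltnn //.
have V_gt0 : (0 < #|stateT m n|)%N by apply/card_gt0P; exists 0.
move: cardQB; rewrite BJ defJ wall_setT cardsT -[RHS]mul1n => /eqP.
by rewrite eqn_pmul2r // => /eqP Q1; rewrite Q1 in Q_gt1.
Qed.

Lemma round_orbit0_full c (S : 'I_c -> {group {perm stateT m n}}) :
  strongly_proper_mixing lam -> (forall i, translGroup m n \subset 'N(S i))%g ->
  (forall i, exists j, (S i :^ g)%g = S j) -> (forall i, orbit 'P (S i) 0 != [set 0]) ->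
  forall i, orbit 'P (S i) 0 = setT.
Proof.
move=> lam_sprop tnS S_conj O_ne0.
pose O i := orbit 'P (S i) 0.
have gO i : exists j, g @: O i = O j /\ maps_cosets g (O i).
  have [j Sij] := S_conj i; exists j.
  by split; [exact: conj_orbit0 round0 Sij | exact: conj_orbit0_maps_cosets round0 Sij].
have O_wall i : exists J, O i = wall m J.
  have [_ [_ gOi]] := gO i.
  by have := round_maps_cosets_wall (orbit0_closed (tnS i)); apply.
move=> i; apply/eqP; apply: contraT => OiT; have [j [gOij _]] := gO i.
have OjT : O j != setT.
  apply/negP => /eqP OjT; move/negP: OiT; apply.
  by rewrite eqEcard subsetT -OjT -gOij leq_imset_card.
have [J OiJ] := O_wall i; have [J' OjJ'] := O_wall j.
exfalso; apply: (lam_sprop J J').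
- by apply: (@is_wall_indexP m); rewrite -OiJ; [exact: O_ne0 | exact: OiT].
- by apply: (@is_wall_indexP m); rewrite -OjJ'; [exact: O_ne0 | exact: OjT].
by rewrite -round_wall -OiJ gOij.
Qed.

Lemma round_not_wreath (G : {group {perm stateT m n}}) :
  (1 < m)%N -> (1 < n)%N -> g \in G -> strongly_proper_mixing lam -> ~ wreath_type G.
Proof.
move=> m_gt1 n_gt1 gG lam_sprop.
case=> c [S [T [N [[c_gt1 c_dvd] [defN _] [defT T_S] [S_iso [S_conj _]] _]]]].
have T_sub_S i : (T i \subset S i)%g by case: (T_S i).
have tnS := bigdprod_sub_norm defN defT T_sub_S.
have O_ne0 i : orbit 'P (S i) 0 != [set 0].
  apply: orbit0_neq0 (T_sub_S i) _ _.
    by rewrite -(bigdprodWY defT) sub_gen // (bigcup_sup i).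
  have [_ _ ->] := T_S i; rewrite -{1}(expn0 2) ltn_exp2l // divn_gt0; last by lia.
  by apply: dvdn_leq c_dvd; rewrite muln_gt0; lia.
have O_full := round_orbit0_full lam_sprop tnS (fun i => S_conj g i gG) O_ne0.
have c_gt0 : (0 < c)%N by lia.
have cardS1 : #|S (Ordinal c_gt1)| = #|stateT m n|.
  apply: card_cent_transitive (O_full (Ordinal c_gt0)) (O_full _).
  by apply: (bigdprod_cent defN).
have d_gt1 : (1 < m * n)%N by nia.
case: (S_iso (Ordinal c_gt1)) => /card_isog; rewrite cardS1 card_state => /esym/eqP.
  by apply/negP; exact: card_Alt_neq_exp2.
by apply/negP; exact: card_Sym_neq_exp2.
Qed.

End Round.

Lemma round_perm_mem_Gamma_h (m n l : nat) (K : finType)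
    (gam lam : 'I_l -> {perm stateT m n}) (phi : K -> 'I_l -> stateT m n) k h :
  round_perm gam lam phi k h \in Gamma_h gam lam phi h.
Proof. by apply: mem_gen; apply: imset_f. Qed.

Theorem proposition4p4
  (m n l : nat) (K : finType)
  (gam lam : 'I_l -> {perm stateT m n})
  (brk : 'I_l -> 'I_n -> {perm brickT m})
  (phi : K -> 'I_l -> stateT m n)
  (r : nat) (h : 'I_l) :
  1 < m -> 1 < n ->
  (forall j : 'I_l, bricklayer_with (gam j) (brk j)) ->
  (forall j : 'I_l, gam j 0%R = 0%R) ->
  (forall j : 'I_l, in_GL (lam j)) ->
  strongly_proper_round lam phi h ->
  ((1 < r < m) /\
     (forall i : 'I_n, diff_uniform (brk h i) (2 ^ r)
                      /\ strongly_anti_invariant (brk h i) (r - 1))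
   \/
   (1 <= r < m) /\
     (forall i : 'I_n, weakly_uniform (brk h i) (2 ^ r)
                      /\ strongly_anti_invariant (brk h i) r)) ->
  [primitive Gamma_h gam lam phi h, on [set: stateT m n] | 'P]
  /\ ~ wreath_type (Gamma_h gam lam phi h).
Proof.
move=> m_gt1 n_gt1 gam_brk gam0 lam_lin [lam_prop lam_sprop phi_onto] bricks.
have f0 i : brk h i 0%R = 0%R.
  by have := congr1 (fun v : stateT m n => v i) (gam0 h); rewrite (gam_brk h) !ffunE.
have f_cond i : brick_condition r (brk h i).
  by case: bricks => [[r_bd /(_ i)[]] | [r_bd /(_ i)[]]]; [left | right].
have [k0 phi0] := phi_onto 0%R.
have gG : (gam h * lam h)%g \in Gamma_h gam lam phi h.
  have := round_perm_mem_Gamma_h gam lam phi k0 h.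
  by rewrite /round_perm phi0 transl0 mulg1.
have tG v : transl v \in Gamma_h gam lam phi h.
  have [k phik] := phi_onto v.
  have := groupM (groupVr gG) (round_perm_mem_Gamma_h gam lam phi k h).
  by rewrite /round_perm phik mulgA mulVg mul1g.
split; first exact: round_primitive (gam_brk h) f0 (lam_lin h) f_cond _ tG gG lam_prop.
exact: round_not_wreath (gam_brk h) f0 (lam_lin h) f_cond _ m_gt1 n_gt1 gG lam_sprop.
Qed.
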